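(* Let $N\ge2$, $T=\{x\in\mathbb{R}^N:1<|x|<2\}$, $2<p<2^*$ ($2^*=\frac{2N}{N-2}$ if $N\ge3$, $+\infty$ if $N=2$), and for $\lambda>0$ let $u_\lambda$ be the unique positive solution in $H^1_{0,rad}(T)$ of $-\Delta u+\lambda u=u^{p-1}$ in $T$, $u=0$ on $\partial T$. Then $$0<\liminf_{\lambda\to+\infty}\frac{\lambda}{\|u_\lambda\|_{L^\infty}^{p-2}}\le\limsup_{\lambda\to+\infty}\frac{\lambda}{\|u_\lambda\|_{L^\infty}^{p-2}}\le 1.$$ *)

From Stdlib Require Import Reals.
From Coquelicot Require Import Coquelicot.
Open Scope R_scope.

Definition subcritical (N : nat) (p : R) : Prop :=
  2 < p /\ (N = 2%nat \/ p < 2 * INR N / (INR N - 2)).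

(* v : R -> R is the radial profile (u(x) = v(|x|)) of a positive classical
   solution of  -Δu + lam u = u^(p-1) in T = {1 < |x| < 2}, u = 0 on ∂T. *)
Definition radial_pos_solution (N : nat) (p lam : R) (v : R -> R) : Prop :=
  (forall r, 1 < r < 2 ->
     ex_derive v r /\ ex_derive (Derive v) r /\ 0 < v r /\
     - Derive_n v 2 r - (INR N - 1) / r * Derive v r + lam * v r
       = Rpower (v r) (p - 1)) /\
  filterlim v (at_right 1) (locally 0) /\
  filterlim v (at_left 2) (locally 0).

Definition Linf_norm (v : R -> R) : R :=
  real (Lub_Rbar (fun y => exists r, 1 < r < 2 /\ y = Rabs (v r))).

From Stdlib Require Import Reals Lra Lia Classical.
From Coquelicot Require Import Coquelicot.
Open Scope R_scope.

(* Let M = v(r0) be the maximum of the radial profile and X = M^(p-2).  The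
   energy E = v'^2/2 + v^p/p - lam v^2/2 satisfies E' = -(N-1)/r v'^2 <= 0;
   comparing E(r0) = M^p/p - lam M^2/2 with E near r = 2, where v -> 0, gives
   lam <= (2/p) X.  Conversely, Gronwall applied to E + lam M^2/2 bounds v'^2 by
   C M^p, so the equation gives v'' <= (lam + D sqrt X) M everywhere and
   v'' <= (lam + D sqrt X - 2^(1-p) X) M where v >= M/2.  If lam were much
   smaller than X, v would then fall from M below 0 within a distance of order
   X^(-1/2) of r0, which is less than 1/2 once lam is large. *)

Lemma Rpower_pos (x y : R) : 0 < Rpower x y.
Proof. apply exp_pos. Qed.

Lemma Rpower_pred (x y : R) : 0 < x -> Rpower x y = Rpower x (y - 1) * x.
Proof.
  intro Hx. rewrite <- (Rpower_1 x) at 3 by exact Hx.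
  rewrite <- Rpower_plus. f_equal. ring.
Qed.

Lemma Rpower_minus2 (x y : R) : 0 < x -> Rpower x y = Rpower x (y - 2) * x ^ 2.
Proof.
  intro Hx. rewrite (Rpower_pred x y), (Rpower_pred x (y - 1)) by exact Hx.
  replace (y - 1 - 1) with (y - 2) by ring. ring.
Qed.

Lemma exp_le_compat (x y : R) : x <= y -> exp x <= exp y.
Proof. intros [H | ->]; [now apply Rlt_le, exp_increasing | apply Rle_refl]. Qed.

Lemma is_derive_continuity_pt (f : R -> R) (x l : R) :
  is_derive f x l -> continuity_pt f x.
Proof.
  intro H. apply continuity_pt_filterlim.
  apply (ex_derive_continuous (K := R_AbsRing) (V := R_NormedModule)).
  now exists l.
Qed.

Lemma is_derive_nonpos_le (g dg : R -> R) (s t : R) : s <= t ->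
  (forall x, s <= x <= t -> is_derive g x (dg x)) ->
  (forall x, s <= x <= t -> dg x <= 0) -> g t <= g s.
Proof.
  intros Hst Hd Hneg.
  destruct (MVT_gen g s t dg) as [c [Hc Heq]]; rewrite ?Rmin_left, ?Rmax_right in * by lra.
  - intros x Hx. apply Hd. lra.
  - intros x Hx. apply (is_derive_continuity_pt _ _ (dg x)), Hd. exact Hx.
  - enough (dg c * (t - s) <= 0) by lra.
    apply Rmult_le_0_r; [apply Hneg |]; lra.
Qed.

Lemma taylor_le (f f1 f2 : R -> R) (K s t : R) : s <= t ->
  (forall x, s <= x <= t -> is_derive f x (f1 x) /\ is_derive f1 x (f2 x)) ->
  (forall x, s <= x <= t -> f2 x <= K) ->
  f t <= f s + f1 s * (t - s) + K * (t - s) ^ 2 / 2.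
Proof.
  intros Hst Hd HK.
  assert (Hf1 : forall y, s <= y <= t -> f1 y <= f1 s + K * (y - s)).
  { intros y Hy.
    enough (f1 y - K * y <= f1 s - K * s) by lra.
    apply (is_derive_nonpos_le (fun z => f1 z - K * z) (fun z => f2 z - K));
      [lra | intros z Hz ..].
    - apply (is_derive_minus f1 (fun z => K * z)); [apply Hd; lra |].
      auto_derive; [easy | ring].
    - specialize (HK z ltac:(lra)). lra. }
  enough (f t - f1 s * (t - s) - K * (t - s) ^ 2 / 2
          <= f s - f1 s * (s - s) - K * (s - s) ^ 2 / 2) by lra.
  apply (is_derive_nonpos_le (fun y => f y - f1 s * (y - s) - K * (y - s) ^ 2 / 2)
           (fun y => f1 y - f1 s - K * (y - s))); [exact Hst | intros y Hy ..].
  - destruct (Hd y Hy) as [Hf _].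
    auto_derive; [now exists (f1 y) |].
    change (Derive (fun x => f x) y) with (Derive f y).
    rewrite (is_derive_unique _ _ _ Hf). field.
  - specialize (Hf1 y Hy). lra.
Qed.

Lemma gronwall_le (h dh : R -> R) (k s t : R) : s <= t ->
  (forall x, s <= x <= t -> is_derive h x (dh x)) ->
  (forall x, s <= x <= t -> - k * h x <= dh x) ->
  h s * exp (k * s) <= h t * exp (k * t).
Proof.
  intros Hst Hd Hge.
  enough (- (h t * exp (k * t)) <= - (h s * exp (k * s))) by lra.
  apply (is_derive_nonpos_le (fun x => - (h x * exp (k * x)))
           (fun x => - ((dh x + k * h x) * exp (k * x)))); [exact Hst | intros x Hx ..].
  - auto_derive; [now exists (dh x); apply Hd |].
    change (Derive (fun y => h y) x) with (Derive h x).
    rewrite (is_derive_unique _ _ _ (Hd x Hx)). ring.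
  - specialize (Hge x Hx). assert (0 < exp (k * x)) by apply exp_pos. nra.
Qed.

Lemma concave_cap_becomes_negative (f f1 f2 : R -> R) (a d M K Q : R) :
  0 < d -> 0 < M ->
  (forall x, a <= x <= a + 5 * d -> is_derive f x (f1 x) /\ is_derive f1 x (f2 x)) ->
  (forall x, a <= x <= a + 5 * d -> f x <= M) -> f a = M -> f1 a = 0 ->
  (forall x, a <= x <= a + 5 * d -> f2 x <= K) ->
  (forall x, a <= x <= a + 5 * d -> M / 2 <= f x -> f2 x <= - Q) ->
  M < Q * d ^ 2 -> 8 * K * d ^ 2 < M ->
  exists x, a <= x <= a + 5 * d /\ f x < 0.
Proof.
  intros Hd HM Hder Hle Hfa Hf1a HK HQ HQd HKd.
  (* f'' <= -Q forces f below M/2 within d; the mean value theorem then gives a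
     slope below -M/(2d), which bounded f'' <= K cannot undo within 4d. *)
  assert (Hhalf : exists c, a < c <= a + d /\ f c < M / 2).
  { apply NNPP. intro Hno.
    assert (Hge : forall x, a <= x <= a + d -> M / 2 <= f x).
    { intros x Hx. apply Rnot_lt_le. intro Hlt.
      assert (x <> a) by (intros ->; lra).
      apply Hno. exists x. split; [lra | exact Hlt]. }
    assert (Hfd := taylor_le f f1 f2 (- Q) a (a + d)).
    assert (M / 2 <= f (a + d)) by (apply Hge; lra).
    enough (f (a + d) <= f a + f1 a * (a + d - a) + - Q * (a + d - a) ^ 2 / 2)
      by (rewrite Hfa, Hf1a in *; nra).
    apply Hfd; [lra | intros x Hx ..].
    - apply Hder. lra.
    - apply HQ, Hge; lra. }
  destruct Hhalf as [c [Hc Hfc]].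
  destruct (MVT_gen f a c f1) as [xi [Hxi Heq]]; rewrite ?Rmin_left, ?Rmax_right in * by lra.
  - intros x Hx. apply Hder. lra.
  - intros x Hx. apply (is_derive_continuity_pt _ _ (f1 x)), Hder. lra.
  - assert (Hneg : f1 xi < 0) by nra.
    assert (Hsteep : f1 xi * d < - M / 2) by nra.
    exists (xi + 4 * d). split; [lra |].
    assert (f xi <= M) by (apply Hle; lra).
    enough (f (xi + 4 * d) <= f xi + f1 xi * (xi + 4 * d - xi) + K * (xi + 4 * d - xi) ^ 2 / 2)
      by nra.
    apply (taylor_le f f1 f2 K); [lra | intros x Hx ..].
    + apply Hder. lra.
    + apply HK. lra.
Qed.

Lemma is_derive_reflect (g : R -> R) (y l : R) :
  is_derive g (- y) l -> is_derive (fun z => g (- z)) y (- l).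
Proof.
  intro H. replace (- l) with (scal (-1) l) by (change (-1 * l = - l); ring).
  apply (is_derive_comp g Ropp); [exact H |].
  auto_derive; [easy | ring].
Qed.

Lemma at_right_small (f : R -> R) (a b eps : R) :
  filterlim f (at_right a) (locally 0) -> 0 < eps -> a < b ->
  exists c, a < c < b /\ forall x, a < x <= c -> f x < eps.
Proof.
  intros Hf He Hab.
  destruct (proj1 (filterlim_locally f 0) Hf (mkposreal eps He)) as [d Hd].
  assert (Hd0 : 0 < d) by apply cond_pos.
  assert (Hm : 0 < Rmin d (b - a) <= d /\ Rmin d (b - a) <= b - a)
    by (split; [split; [apply Rmin_pos | apply Rmin_l] | apply Rmin_r]; lra).
  exists (a + Rmin d (b - a) / 2). split; [lra |]. intros x Hx.
  assert (H : Rabs (f x - 0) < eps).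
  { apply Hd; [| lra]. change (Rabs (x - a) < d). rewrite Rabs_right; lra. }
  rewrite Rminus_0_r in H. apply Rabs_lt_between in H. lra.
Qed.

Lemma at_left_small (f : R -> R) (a b eps : R) :
  filterlim f (at_left b) (locally 0) -> 0 < eps -> a < b ->
  exists c, a < c < b /\ forall x, c <= x < b -> f x < eps.
Proof.
  intros Hf He Hab.
  destruct (proj1 (filterlim_locally f 0) Hf (mkposreal eps He)) as [d Hd].
  assert (Hd0 : 0 < d) by apply cond_pos.
  assert (Hm : 0 < Rmin d (b - a) <= d /\ Rmin d (b - a) <= b - a)
    by (split; [split; [apply Rmin_pos | apply Rmin_l] | apply Rmin_r]; lra).
  exists (b - Rmin d (b - a) / 2). split; [lra |]. intros x Hx.
  assert (H : Rabs (f x - 0) < eps).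
  { apply Hd; [| lra]. change (Rabs (x - b) < d). rewrite Rabs_left; lra. }
  rewrite Rminus_0_r in H. apply Rabs_lt_between in H. lra.
Qed.

Lemma Linf_norm_max (v : R -> R) (r0 : R) : 1 < r0 < 2 ->
  (forall r, 1 < r < 2 -> 0 < v r <= v r0) -> Linf_norm v = v r0.
Proof.
  intros Hr0 Hmax. unfold Linf_norm.
  rewrite (is_lub_Rbar_unique _ (Finite (v r0))); [reflexivity | split].
  - intros y [r [Hr ->]]. simpl. destruct (Hmax r Hr). rewrite Rabs_right; lra.
  - intros b Hb. apply Hb. exists r0. split; [exact Hr0 |].
    destruct (Hmax r0 Hr0). rewrite Rabs_right; lra.
Qed.

Definition energy (p lam : R) (v : R -> R) (r : R) : R :=
  Derive v r ^ 2 / 2 + Rpower (v r) p / p - lam * v r ^ 2 / 2.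

Definition damping_const (N : nat) : R :=
  (INR N - 1) * sqrt (2 * exp (2 * (INR N - 1))).

Definition half_pow (p : R) : R := Rpower (/ 2) (p - 1).

Definition large_lam (N : nat) (p : R) : R :=
  Rmax (400 / 64) (64 * damping_const N ^ 2 / half_pow p).

Section RadialSolution.

Variables (N : nat) (p lam : R) (v : R -> R).
Hypothesis HN : (1 <= N)%nat.
Hypothesis Hp : 2 < p.
Hypothesis Hlam : 0 < lam.
Hypothesis Hv : radial_pos_solution N p lam v.

Lemma dim_pred_nonneg : 0 <= INR N - 1.
Proof. apply le_INR in HN. simpl in HN. lra. Qed.

Lemma radial_ode (r : R) : 1 < r < 2 ->
  is_derive v r (Derive v r) /\ is_derive (Derive v) r (Derive (Derive v) r) /\ 0 < v r /\
  Derive (Derive v) r = lam * v r - Rpower (v r) (p - 1) - (INR N - 1) / r * Derive v r.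
Proof.
  intro Hr. destruct Hv as [Hode _]. destruct (Hode r Hr) as [H1 [H2 [Hpos Heq]]].
  split; [now apply Derive_correct |]. split; [now apply Derive_correct |].
  split; [exact Hpos |]. change (Derive_n v 2 r) with (Derive (Derive v) r) in Heq. lra.
Qed.

Lemma radial_max_exists : exists r0, 1 < r0 < 2 /\ forall r, 1 < r < 2 -> v r <= v r0.
Proof.
  destruct Hv as [_ [H1 H2]].
  assert (Hmid : 0 < v (3 / 2)) by (apply radial_ode; lra).
  destruct (at_right_small v 1 (3 / 2) _ H1 Hmid) as [a [Ha Hleft]]; [lra |].
  destruct (at_left_small v (3 / 2) 2 _ H2 Hmid) as [b [Hb Hright]]; [lra |].
  destruct (continuity_ab_maj v a b) as [r0 [Hmaj Hr0]]; [lra | |].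
  { intros c Hc. apply (is_derive_continuity_pt _ _ (Derive v c)), radial_ode. lra. }
  exists r0. split; [lra |]. intros r Hr.
  assert (v (3 / 2) <= v r0) by (apply Hmaj; lra).
  destruct (Rle_lt_dec r a); [specialize (Hleft r ltac:(lra)); lra |].
  destruct (Rle_lt_dec b r); [specialize (Hright r ltac:(lra)); lra |].
  apply Hmaj. lra.
Qed.

Lemma energy_derive (r : R) : 1 < r < 2 ->
  is_derive (energy p lam v) r (- (INR N - 1) / r * Derive v r ^ 2).
Proof.
  intro Hr. destruct (radial_ode r Hr) as [H1 [H2 [Hpos Hode]]].
  unfold energy, Rpower. auto_derive.
  - repeat split; try exact Hpos; eexists; eassumption.
  - change (Derive (fun x => Derive v x) r) with (Derive (Derive v) r).
    change (Derive (fun x => v x) r) with (Derive v r).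
    change (exp (p * ln (v r))) with (Rpower (v r) p).
    rewrite Hode, (Rpower_pred (v r) p) by exact Hpos. field. lra.
Qed.

Lemma energy_nonincreasing (s t : R) : 1 < s -> s <= t -> t < 2 ->
  energy p lam v t <= energy p lam v s.
Proof.
  intros Hs Hst Ht.
  apply (is_derive_nonpos_le _ (fun r => - (INR N - 1) / r * Derive v r ^ 2));
    [exact Hst | intros x Hx ..].
  - apply energy_derive. lra.
  - assert (0 <= (INR N - 1) / x) by (apply Rdiv_le_0_compat; [apply dim_pred_nonneg | lra]).
    assert (0 <= Derive v x ^ 2) by apply pow2_ge_0.
    rewrite Rdiv_opp_l. nra.
Qed.

Lemma energy_gronwall_le (M s t : R) : (forall r, 1 < r < 2 -> v r <= M) ->
  1 < s -> s <= t -> t < 2 ->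
  (energy p lam v s + lam * M ^ 2 / 2) * exp (2 * (INR N - 1) * s)
  <= (energy p lam v t + lam * M ^ 2 / 2) * exp (2 * (INR N - 1) * t).
Proof.
  intros HM Hs Hst Ht.
  apply (gronwall_le (fun x => energy p lam v x + lam * M ^ 2 / 2)
           (fun x => - (INR N - 1) / x * Derive v x ^ 2)); [exact Hst | intros x Hx ..].
  - rewrite <- (plus_zero_r (- (INR N - 1) / x * Derive v x ^ 2)).
    apply (is_derive_plus (energy p lam v)); [apply energy_derive; lra | auto_derive; auto].
  - destruct (radial_ode x ltac:(lra)) as [_ [_ [Hpos _]]].
    assert (Hvx : v x ^ 2 <= M ^ 2) by (specialize (HM x ltac:(lra)); nra).
    assert (Hpow : 0 < Rpower (v x) p / p) by (apply Rdiv_lt_0_compat; [apply Rpower_pos | lra]).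
    assert (HN1 := dim_pred_nonneg).
    assert (Hdamp : (INR N - 1) / x <= INR N - 1) by (apply Rle_div_l; nra).
    assert (0 <= ((INR N - 1) - (INR N - 1) / x) * Derive v x ^ 2)
      by (apply Rmult_le_pos; [lra | apply pow2_ge_0]).
    assert (0 <= (INR N - 1) * (Rpower (v x) p / p + lam * (M ^ 2 - v x ^ 2) / 2))
      by (apply Rmult_le_pos; nra).
    unfold energy. rewrite Rdiv_opp_l. nra.
Qed.

Variable r0 : R.
Hypothesis Hr0 : 1 < r0 < 2.
Hypothesis Hmax : forall r, 1 < r < 2 -> v r <= v r0.

Lemma derive_at_max : Derive v r0 = 0.
Proof.
  assert (Hd : ex_derive v r0) by (eexists; apply radial_ode; exact Hr0).
  rewrite <- (Derive_Reals v r0 (ex_derive_Reals_0 v r0 Hd)).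
  apply (deriv_maximum v 1 2); [lra | lra | intros; apply Hmax; lra].
Qed.

Lemma energy_at_max : energy p lam v r0 = Rpower (v r0) p / p - lam * v r0 ^ 2 / 2.
Proof. unfold energy. rewrite derive_at_max. lra. Qed.

Lemma lam_max_sq_le : lam * v r0 ^ 2 / 2 <= Rpower (v r0) p / p.
Proof.
  apply Rnot_lt_le. intro Hneg.
  set (phi := Rpower (v r0) p / p - lam * v r0 ^ 2 / 2).
  set (eta := Rmin 1 (- phi / lam)).
  assert (Heta : 0 < eta <= 1)
    by (split; [apply Rmin_pos; [| apply Rdiv_lt_0_compat] | apply Rmin_l]; unfold phi; lra).
  assert (Hlam_eta : lam * eta <= - phi).
  { assert (H : lam * eta <= lam * (- phi / lam))
      by (apply Rmult_le_compat_l; [lra | apply Rmin_r]).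
    replace (lam * (- phi / lam)) with (- phi) in H by (field; lra). exact H. }
  destruct Hv as [_ [_ Hright]].
  destruct (at_left_small v r0 2 eta Hright (proj1 Heta) (proj2 Hr0)) as [x [Hx Hsmall]].
  specialize (Hsmall x (conj (Rle_refl x) (proj2 Hx))).
  destruct (radial_ode x ltac:(lra)) as [_ [_ [Hpos _]]].
  assert (HE := energy_nonincreasing r0 x ltac:(lra) ltac:(lra) ltac:(lra)).
  rewrite energy_at_max in HE. unfold energy in HE. fold phi in HE.
  assert (0 <= Derive v x ^ 2) by apply pow2_ge_0.
  assert (0 < Rpower (v x) p / p) by (apply Rdiv_lt_0_compat; [apply Rpower_pos | lra]).
  assert (v x ^ 2 < eta) by nra.
  nra.
Qed.

Lemma lam_le_max_pow : lam <= Rpower (v r0) (p - 2).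
Proof.
  assert (HM : 0 < v r0) by (apply radial_ode; exact Hr0).
  assert (H := lam_max_sq_le). rewrite (Rpower_minus2 (v r0) p HM) in H.
  assert (HX := Rpower_pos (v r0) (p - 2)).
  assert (HM2 : 0 < v r0 ^ 2) by nra.
  assert (H' : lam * p * v r0 ^ 2 <= 2 * Rpower (v r0) (p - 2) * v r0 ^ 2).
  { apply (Rmult_le_compat_r (2 * p)) in H; [| lra].
    replace (Rpower (v r0) (p - 2) * v r0 ^ 2 / p * (2 * p))
      with (2 * Rpower (v r0) (p - 2) * v r0 ^ 2) in H by (field; lra).
    lra. }
  assert (lam * p <= 2 * Rpower (v r0) (p - 2)) by (apply (Rmult_le_reg_r (v r0 ^ 2)); lra).
  nra.
Qed.

Lemma derive_sq_le (r : R) : 1 < r < 2 ->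
  Derive v r ^ 2 <= 2 * exp (2 * (INR N - 1)) * Rpower (v r0) p.
Proof.
  intro Hr.
  set (k := 2 * (INR N - 1)).
  set (h := fun x => energy p lam v x + lam * v r0 ^ 2 / 2).
  destruct (radial_ode r Hr) as [_ [_ [Hpos _]]].
  assert (HMp := Rpower_pos (v r0) p).
  assert (Hk : 0 <= k) by (unfold k; assert (H := dim_pred_nonneg); lra).
  assert (Hh0 : 0 <= h r0 <= Rpower (v r0) p).
  { unfold h. rewrite energy_at_max.
    assert (Rpower (v r0) p / p <= Rpower (v r0) p) by (apply Rle_div_l; nra).
    assert (0 <= Rpower (v r0) p / p) by (apply Rdiv_le_0_compat; lra).
    lra. }
  assert (Hhr : Derive v r ^ 2 <= 2 * h r).
  { unfold h, energy.
    assert (0 <= Rpower (v r) p / p) by (apply Rdiv_le_0_compat; [apply Rlt_le, Rpower_pos | lra]).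
    assert (v r ^ 2 <= v r0 ^ 2) by (specialize (Hmax r Hr); nra).
    nra. }
  enough (h r <= exp k * Rpower (v r0) p) by lra.
  assert (Hek : 1 <= exp k) by (rewrite <- exp_0; apply exp_le_compat; exact Hk).
  destruct (Rle_lt_dec r0 r) as [Hle | Hlt].
  - assert (h r <= h r0) by (unfold h; apply Rplus_le_compat_r, energy_nonincreasing; lra).
    nra.
  - assert (HG : h r * exp (k * r) <= h r0 * exp (k * r0))
      by exact (energy_gronwall_le (v r0) r r0 Hmax ltac:(lra) ltac:(lra) ltac:(lra)).
    replace (k * r0) with (k * r + k * (r0 - r)) in HG by ring.
    rewrite exp_plus in HG.
    assert (Hshift : exp (k * (r0 - r)) <= exp k) by (apply exp_le_compat; nra).
    assert (Her := exp_pos (k * r)).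
    assert (h r <= h r0 * exp (k * (r0 - r))) by (apply (Rmult_le_reg_r (exp (k * r))); nra).
    nra.
Qed.

Lemma damping_le (r : R) : 1 < r < 2 ->
  - ((INR N - 1) / r * Derive v r) <= damping_const N * sqrt (Rpower (v r0) (p - 2)) * v r0.
Proof.
  intro Hr.
  set (C := 2 * exp (2 * (INR N - 1))).
  set (X := Rpower (v r0) (p - 2)).
  assert (HM : 0 < v r0) by (apply radial_ode; exact Hr0).
  assert (HC : 0 < C) by (unfold C; assert (H := exp_pos (2 * (INR N - 1))); lra).
  assert (HX : 0 < X) by apply Rpower_pos.
  assert (Hbound : 0 <= sqrt C * sqrt X * v r0)
    by (apply Rmult_le_pos; [apply Rmult_le_pos; apply sqrt_pos | lra]).
  assert (Habs : Rabs (Derive v r) <= sqrt C * sqrt X * v r0).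
  { rewrite <- (Rabs_right (sqrt C * sqrt X * v r0)) by lra.
    apply Rsqr_le_abs_0. unfold Rsqr.
    replace (sqrt C * sqrt X * v r0 * (sqrt C * sqrt X * v r0))
      with ((sqrt C * sqrt C) * (sqrt X * sqrt X) * v r0 ^ 2) by ring.
    rewrite !sqrt_sqrt by lra.
    assert (H := derive_sq_le r Hr). rewrite (Rpower_minus2 (v r0) p HM) in H.
    fold C X in H. lra. }
  assert (HN1 := dim_pred_nonneg).
  assert (Hdamp : (INR N - 1) / r <= INR N - 1) by (apply Rle_div_l; nra).
  assert (0 <= (INR N - 1) / r) by (apply Rdiv_le_0_compat; lra).
  assert (- Derive v r <= Rabs (Derive v r)) by apply Rabs_maj2.
  unfold damping_const. fold C. fold X.
  nra.
Qed.

Lemma second_derive_le (r : R) : 1 < r < 2 ->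
  Derive (Derive v) r <= (lam + damping_const N * sqrt (Rpower (v r0) (p - 2))) * v r0.
Proof.
  intro Hr. destruct (radial_ode r Hr) as [_ [_ [Hpos ->]]].
  assert (H := damping_le r Hr). assert (H' := Rpower_pos (v r) (p - 1)).
  assert (v r <= v r0) by (apply Hmax; exact Hr).
  nra.
Qed.

Lemma second_derive_le_near_max (r : R) : 1 < r < 2 -> v r0 / 2 <= v r ->
  Derive (Derive v) r <= (lam + damping_const N * sqrt (Rpower (v r0) (p - 2))
                          - half_pow p * Rpower (v r0) (p - 2)) * v r0.
Proof.
  intros Hr Hhalf. destruct (radial_ode r Hr) as [_ [_ [Hpos ->]]].
  assert (HM : 0 < v r0) by (apply radial_ode; exact Hr0).
  assert (Hpow : half_pow p * Rpower (v r0) (p - 2) * v r0 <= Rpower (v r) (p - 1)).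
  { rewrite Rmult_assoc. replace (p - 2) with (p - 1 - 1) by ring.
    rewrite <- (Rpower_pred (v r0) (p - 1)) by exact HM.
    unfold half_pow. rewrite Rpower_mult_distr by lra.
    apply Rle_Rpower_l; lra. }
  assert (H := damping_le r Hr).
  assert (v r <= v r0) by (apply Hmax; exact Hr).
  nra.
Qed.

Lemma radial_no_sharp_cap (d K Q : R) : 0 < d -> 10 * d < 1 ->
  (forall r, 1 < r < 2 -> Derive (Derive v) r <= K) ->
  (forall r, 1 < r < 2 -> v r0 / 2 <= v r -> Derive (Derive v) r <= - Q) ->
  v r0 < Q * d ^ 2 -> 8 * K * d ^ 2 < v r0 -> False.
Proof.
  intros Hd Hd10 HK HQ HQd HKd.
  assert (HM : 0 < v r0) by (apply radial_ode; exact Hr0).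
  (* There is room 5 d < 1/2 to the right of r0 if r0 <= 3/2, to the left otherwise. *)
  destruct (Rle_lt_dec r0 (3 / 2)) as [Hleft | Hright].
  - destruct (concave_cap_becomes_negative v (Derive v) (Derive (Derive v)) r0 d (v r0) K Q)
      as [x [Hx Hneg]]; try easy.
    + intros x Hx. destruct (radial_ode x ltac:(lra)) as [H1 [H2 _]]. now split.
    + intros x Hx. apply Hmax. lra.
    + exact derive_at_max.
    + intros x Hx. apply HK. lra.
    + intros x Hx. apply HQ. lra.
    + destruct (radial_ode x ltac:(lra)) as [_ [_ [Hpos _]]]. lra.
  - destruct (concave_cap_becomes_negative (fun y => v (- y)) (fun y => - Derive v (- y))
                (fun y => Derive (Derive v) (- y)) (- r0) d (v r0) K Q)
      as [x [Hx Hneg]]; try easy.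
    + intros x Hx. destruct (radial_ode (- x) ltac:(lra)) as [H1 [H2 _]].
      split; [now apply is_derive_reflect |].
      rewrite <- (Ropp_involutive (Derive (Derive v) (- x))).
      apply (is_derive_opp (fun y => Derive v (- y))). now apply is_derive_reflect.
    + intros x Hx. apply Hmax. lra.
    + simpl. now rewrite Ropp_involutive.
    + simpl. rewrite Ropp_involutive, derive_at_max. apply Ropp_0.
    + intros x Hx. apply HK. lra.
    + intros x Hx. apply HQ. lra.
    + destruct (radial_ode (- x) ltac:(lra)) as [_ [_ [Hpos _]]]. lra.
Qed.

Lemma scaled_lam_damping_ge : 400 / half_pow p < Rpower (v r0) (p - 2) ->
  half_pow p / 32 <= lam / Rpower (v r0) (p - 2) + damping_const N / sqrt (Rpower (v r0) (p - 2)).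
Proof.
  intro HX400. apply Rnot_lt_le. intro Hsmall.
  set (a := half_pow p) in *.
  set (X := Rpower (v r0) (p - 2)) in *.
  set (D := damping_const N) in *.
  set (s := sqrt X) in *.
  set (t := (lam / X + D / s) / a).
  (* With d^2 = 4 / (a X) the bounds required by [radial_no_sharp_cap] become
     1 < 4 (1 - t) and 32 t < 1. *)
  set (d := sqrt (4 / (a * X))).
  assert (HM : 0 < v r0) by (apply radial_ode; exact Hr0).
  assert (Ha : 0 < a) by apply Rpower_pos.
  assert (HX : 0 < X) by apply Rpower_pos.
  assert (Hs : 0 < s) by (apply sqrt_lt_R0; exact HX).
  assert (Hss : s * s = X) by (apply sqrt_sqrt; lra).
  assert (Hd2 : d ^ 2 = 4 / (a * X))
    by (unfold d; rewrite <- Rsqr_pow2; apply Rsqr_sqrt, Rlt_le, Rdiv_lt_0_compat; nra).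
  assert (Hd : 0 < d) by (apply sqrt_lt_R0, Rdiv_lt_0_compat; nra).
  assert (Ht : t < 1 / 32) by (unfold t; apply Rlt_div_l; lra).
  assert (Hlin : lam + D * s = t * a * X) by (unfold t; rewrite <- Hss; field; lra).
  apply (radial_no_sharp_cap d (t * a * X * v r0) ((1 - t) * a * X * v r0)).
  - exact Hd.
  - assert (d ^ 2 < 1 / 100).
    { rewrite Hd2. apply Rlt_div_l; [nra |].
      apply Rlt_div_l in HX400; lra. }
    nra.
  - intros r Hr. rewrite <- Hlin. apply second_derive_le. exact Hr.
  - intros r Hr Hhalf. assert (H := second_derive_le_near_max r Hr Hhalf).
    fold a X D s in H. rewrite Hlin in H. lra.
  - replace ((1 - t) * a * X * v r0 * d ^ 2) with (4 * (1 - t) * v r0) by (rewrite Hd2; field; lra).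
    nra.
  - replace (8 * (t * a * X * v r0) * d ^ 2) with (32 * t * v r0) by (rewrite Hd2; field; lra).
    nra.
Qed.

Lemma lam_ge_lower_const : large_lam N p <= lam ->
  half_pow p / 64 * Rpower (v r0) (p - 2) <= lam.
Proof.
  intro HL. apply Rnot_lt_le. intro Hlt. unfold large_lam in HL.
  set (a := half_pow p) in *.
  set (X := Rpower (v r0) (p - 2)) in *.
  set (D := damping_const N) in *.
  assert (Ha : 0 < a) by apply Rpower_pos.
  assert (HX : 0 < X) by apply Rpower_pos.
  assert (HL1 : 400 / 64 <= lam) by (eapply Rle_trans; [apply Rmax_l | exact HL]).
  assert (HL2 : 64 * D ^ 2 / a <= lam) by (eapply Rle_trans; [apply Rmax_r | exact HL]).
  assert (HaX : 64 * lam < a * X) by lra.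
  assert (Hlam_X : lam / X < a / 64) by (apply Rlt_div_l; lra).
  assert (HD_s : D / sqrt X <= a / 64).
  { assert (Hs : 0 < sqrt X) by (apply sqrt_lt_R0; exact HX).
    assert (HD : 0 <= D) by (apply Rmult_le_pos; [apply dim_pred_nonneg | apply sqrt_pos]).
    assert (64 * D ^ 2 <= a * lam) by (apply Rle_div_l in HL2; lra).
    assert ((64 * D) ^ 2 < (a * sqrt X) ^ 2)
      by (rewrite !Rpow_mult_distr, pow2_sqrt by lra; nra).
    assert (0 < a * sqrt X) by nra.
    apply Rle_div_l; [exact Hs |]. nra. }
  assert (H := scaled_lam_damping_ge).
  assert (400 / a < X) by (apply Rlt_div_l; lra).
  fold a X D in H. lra.
Qed.

End RadialSolution.

Lemma radial_solution_ratio_bounds (N : nat) (p lam : R) (v : R -> R) :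
  (1 <= N)%nat -> 2 < p -> 0 < lam -> radial_pos_solution N p lam v ->
  lam / Rpower (Linf_norm v) (p - 2) <= 1 /\
  (large_lam N p <= lam -> half_pow p / 64 <= lam / Rpower (Linf_norm v) (p - 2)).
Proof.
  intros HN Hp Hlam Hv.
  destruct (radial_max_exists N p lam v Hv) as [r0 [Hr0 Hmax]].
  rewrite (Linf_norm_max v r0 Hr0)
    by (intros r Hr; split; [now apply (radial_ode N p lam v Hv) | now apply Hmax]).
  assert (HX := Rpower_pos (v r0) (p - 2)).
  split.
  - apply (Rdiv_le_1 _ _ HX). now apply (lam_le_max_pow N p lam v).
  - intro HL. apply (Rle_div_r _ _ _ HX). now apply (lam_ge_lower_const N p lam v).
Qed.

Theorem lemma2p3 (N : nat) (p : R) (u : R -> R -> R)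
  (HN : (2 <= N)%nat) (Hp : subcritical N p)
  (Hu : forall lam, 0 < lam -> radial_pos_solution N p lam (u lam)) :
  (* 0 < liminf_{lam -> +oo} lam / ||u_lam||_oo^(p-2) *)
  (exists c, 0 < c /\ exists L, forall lam, L <= lam ->
       c <= lam / Rpower (Linf_norm (u lam)) (p - 2)) /\
  (* limsup_{lam -> +oo} lam / ||u_lam||_oo^(p-2) <= 1 *)
  (forall eps, 0 < eps -> exists L, forall lam, L <= lam ->
       lam / Rpower (Linf_norm (u lam)) (p - 2) <= 1 + eps).
Proof.
  destruct Hp as [Hp _].
  assert (HN1 : (1 <= N)%nat) by lia.
  assert (Hbounds := fun lam Hlam =>
    radial_solution_ratio_bounds N p lam (u lam) HN1 Hp Hlam (Hu lam Hlam)).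
  split.
  - exists (half_pow p / 64). split; [apply Rdiv_lt_0_compat; [apply Rpower_pos | lra] |].
    exists (large_lam N p). intros lam HL.
    assert (Hlam : 0 < lam) by (eapply Rlt_le_trans; [| exact HL]; unfold large_lam;
                                eapply Rlt_le_trans; [| apply Rmax_l]; lra).
    now apply (Hbounds lam Hlam).
  - intros eps Heps. exists 1. intros lam Hlam.
    destruct (Hbounds lam ltac:(lra)) as [Hle _]. lra.
Qed.
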